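(* Consider the downtown bathtub model described in the context with a fixed number $N_s>0$ of suburban commuters, and assume hypercongestion, i.e. that the equilibrium quantity $\theta=\frac{C_s^{b*}v_f}{\alpha L}$ satisfies $\theta>2$. Then: (i) the short-run equilibrium bathtub cost $C_s^{b*}$ is uniquely determined (there is exactly one $\theta>2$ with $N_s=\alpha n_j(\frac1\beta+\frac1\gamma)(\ln\theta+\frac1\theta-1)$); (ii) the introduction of autonomous vehicles, i.e. replacing $\alpha$ by $\eta\alpha$ and $n_j$ by $\xi n_j$ with $\frac{\beta}{\alpha}<\eta\le 1$ and $\xi\ge 1$, may increase or may decrease the short-run equilibrium bathtub cost: there are admissible parameter values for which it increases and admissible parameter values for which it decreases.
   Context: Downtown traffic (bathtub model): the vehicle accumulation $n(t)\ge 0$ in the downtown area evolves as $\dot n(t)=I(t)-G(t)$, with inflow $I(t)$ and outflow $G(t)=n(t)v(t)/L$, where $L>0$ is the downtown trip length and $v(t)=v_f(1-n(t)/n_j)$ (Greenshields), $v_f>0$ free-flow speed, $n_j>0$ jam accumulation. The downtown travel time of a commuter arriving at time $t$ is $T(t)=L/v(t)$. A suburban commuter arriving at work at time $t$ incurs bathtub cost $C_s^b(t)=\alpha T(t)+s(t)$ with $s(t)=\beta(t^*-t)$ for $t\le t^*$ and $s(t)=\gamma(t-t^* )$ for $t>t^*$, where $\alpha,\beta,\gamma>0$ and $t^*$ is the desired arrival time. A short-run equilibrium is a path $n(\cdot)$ and a number $C_s^{b*}$ with $C_s^b(t)=C_s^{b*}$ whenever $n(t)>0$, $C_s^b(t)\ge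 C_s^{b*}$ whenever $n(t)=0$, and $\int_{\mathbb{R}} n(t)v(t)/L\,dt=N_s$. Autonomous vehicles are modelled by a value-of-time reduction $\alpha\mapsto\eta\alpha$ ($\beta/\alpha<\eta\le1$) and a network capacity increase $n_j\mapsto\xi n_j$ ($\xi\ge1$), all other parameters unchanged. *)

From Stdlib Require Import Reals Lra.
From Coquelicot Require Import Coquelicot.
Open Scope R_scope.

Definition speed (vf nj n : R) : R := vf * (1 - n / nj).

Definition sched (beta gamma tstar t : R) : R :=
  if Rle_dec t tstar then beta * (tstar - t) else gamma * (t - tstar).

Definition travel_time (L vf nj : R) (n : R -> R) (t : R) : R :=
  L / speed vf nj (n t).

Definition bathtub_cost (alpha beta gamma tstar L vf nj : R) (n : R -> R) (t : R) : R :=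
  alpha * travel_time L vf nj n t + sched beta gamma tstar t.

Definition outflow (L vf nj : R) (n : R -> R) (t : R) : R :=
  n t * speed vf nj (n t) / L.

(* Short-run equilibrium: path n and cost Cstar.  The inflow I is
   implicitly I = dn/dt + G and is not otherwise constrained. *)
Definition is_equilibrium (alpha beta gamma tstar L vf nj Ns : R)
    (n : R -> R) (Cstar : R) : Prop :=
  (forall t, 0 <= n t < nj) /\
  (forall t, 0 < n t -> bathtub_cost alpha beta gamma tstar L vf nj n t = Cstar) /\
  (forall t, n t = 0 -> bathtub_cost alpha beta gamma tstar L vf nj n t >= Cstar) /\
  is_RInt_gen (outflow L vf nj n) (Rbar_locally m_infty) (Rbar_locally p_infty) Ns.

Definition theta (alpha L vf Cstar : R) : R := Cstar * vf / (alpha * L).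

Definition eq_rhs (alpha beta gamma nj th : R) : R :=
  alpha * nj * (1 / beta + 1 / gamma) * (ln th + 1 / th - 1).

(* In an equilibrium every commuter's cost equals C*, which pins down the accumulation at
   each time through the schedule delay s alone: n = nj (1 - K / (C* - s)), where K = alpha L / vf
   is the free-flow travel cost, and n = 0 once s >= C* - K.  On each of the two linear branches
   of s the outflow n v / L equals (nj vf / L) (1 / w - 1 / w^2) with w = (C* - s) / K affine in
   t, so it integrates in closed form: the total outflow is alpha nj (1 / beta + 1 / gamma) psi theta
   with psi theta = ln theta + 1 / theta - 1.  As psi is strictly increasing on [1, oo), N_s
   determines theta and hence C*.
   Autonomous vehicles turn the equation into eta xi psi theta' = psi theta and the cost into
   theta' eta alpha L / vf.  With eta = 1 and xi > 1 they lower theta and the cost; with xi = 1 and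
   eta < 1 they can raise theta from e^2 to e^3, which outweighs the factor eta. *)

From Stdlib Require Import Reals Lra FunctionalExtensionality.
From Coquelicot Require Import Coquelicot.
Open Scope R_scope.

Definition psi (x : R) : R := ln x + 1 / x - 1.

Lemma eq_rhs_psi alpha beta gamma nj th :
  eq_rhs alpha beta gamma nj th = alpha * nj * (1 / beta + 1 / gamma) * psi th.
Proof. reflexivity. Qed.

Lemma psi_1 : psi 1 = 0.
Proof. unfold psi; rewrite ln_1; field. Qed.

Lemma psi_exp a : psi (exp a) = a + exp (- a) - 1.
Proof. unfold psi; rewrite ln_exp, exp_Ropp; field; apply Rgt_not_eq, exp_pos. Qed.

Lemma psi_lt x y : 1 <= x -> x < y -> psi x < psi y.
Proof.
  intros Hx Hxy; unfold psi.
  assert (Hln : ln (x / y) < x / y - 1).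
  { assert (Hne : ln (x / y) <> 0).
    { rewrite ln_div by lra; intro E.
      assert (x = y) by (apply ln_inv; lra). lra. }
    pose proof (exp_ineq1 _ Hne) as H.
    rewrite exp_ln in H by (apply Rdiv_lt_0_compat; lra). lra. }
  rewrite ln_div in Hln by lra.
  (* ln y - ln x > 1 - x / y, and 1 - x / y + 1 / y - 1 / x = (y - x) (x - 1) / (x y) >= 0. *)
  assert (0 <= (y - x) * (x - 1) / (x * y)).
  { apply Rmult_le_pos; [nra | left; apply Rinv_0_lt_compat; nra]. }
  replace ((y - x) * (x - 1) / (x * y)) with (1 - x / y + 1 / y - 1 / x) in H by (field; lra).
  lra.
Qed.

Lemma psi_inj x y : 1 <= x -> 1 <= y -> psi x = psi y -> x = y.
Proof.
  intros Hx Hy E.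
  destruct (Rtotal_order x y) as [H | [H | H]]; auto; apply psi_lt in H; lra.
Qed.

Lemma eq_rhs_inj alpha beta gamma nj x y :
  0 < alpha -> 0 < beta -> 0 < gamma -> 0 < nj -> 1 <= x -> 1 <= y ->
  eq_rhs alpha beta gamma nj x = eq_rhs alpha beta gamma nj y -> x = y.
Proof.
  intros Ha Hb Hg Hn Hx Hy E; rewrite !eq_rhs_psi in E.
  apply psi_inj; auto.
  assert (0 < 1 / beta) by (apply Rdiv_lt_0_compat; lra).
  assert (0 < 1 / gamma) by (apply Rdiv_lt_0_compat; lra).
  apply (Rmult_eq_reg_l (alpha * nj * (1 / beta + 1 / gamma))); [exact E|].
  apply Rgt_not_eq, Rmult_lt_0_compat; [nra | lra].
Qed.

Lemma is_RInt_gen_zero {Fa Fb : (R -> Prop) -> Prop} {FFa : Filter Fa} {FFb : Filter Fb} :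
  is_RInt_gen (fun _ : R => 0) Fa Fb 0.
Proof.
  assert (Hd : Derive (fun _ : R => 0) = fun _ => 0).
  { apply functional_extensionality; intro; apply Derive_const. }
  pose proof (@is_RInt_gen_Derive Fa Fb _ _ (fun _ => 0) 0 0) as H.
  rewrite Hd, Rminus_0_r in H.
  apply H; try apply filterlim_const; apply filter_forall; intros ab x _.
  - apply ex_derive_const.
  - apply continuous_const.
Qed.

Lemma is_RInt_gen_of_vanishing_outside (f : R -> R) (a b l : R) :
  (forall x, x < a \/ b < x -> f x = 0) -> is_RInt f a b l ->
  is_RInt_gen f (Rbar_locally m_infty) (Rbar_locally p_infty) l.
Proof.
  intros Hf Hab.
  assert (Hleft : is_RInt_gen f (Rbar_locally m_infty) (at_point a) 0).
  { apply (is_RInt_gen_ext (Fa := Rbar_locally m_infty) (Fb := at_point a) (fun _ => 0));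
      [|exact is_RInt_gen_zero].
    apply (Filter_prod _ _ _ (fun x => x < a) (fun y => y = a));
      [now exists a | reflexivity |].
    intros x y Hx -> z Hz; simpl in Hz.
    rewrite Rmax_right in Hz by lra. symmetry; apply Hf; lra. }
  assert (Hright : is_RInt_gen f (at_point b) (Rbar_locally p_infty) 0).
  { apply (is_RInt_gen_ext (Fa := at_point b) (Fb := Rbar_locally p_infty) (fun _ => 0));
      [|exact is_RInt_gen_zero].
    apply (Filter_prod _ _ _ (fun y => y = b) (fun x => b < x));
      [reflexivity | now exists b |].
    intros y x -> Hx z Hz; simpl in Hz.
    rewrite Rmin_left in Hz by lra. symmetry; apply Hf; lra. }
  apply is_RInt_gen_at_point in Hab.
  pose proof (is_RInt_gen_Chasles _ _ _ _ (is_RInt_gen_Chasles _ _ _ _ Hleft Hab) Hright) as H.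
  unfold plus in H; simpl in H; rewrite Rplus_0_l, Rplus_0_r in H.
  exact H.
Qed.

Lemma is_RInt_gen_line_unique (f : R -> R) (l1 l2 : R) :
  is_RInt_gen f (Rbar_locally m_infty) (Rbar_locally p_infty) l1 ->
  is_RInt_gen f (Rbar_locally m_infty) (Rbar_locally p_infty) l2 -> l1 = l2.
Proof.
  intros H1 H2.
  pose proof (@is_RInt_gen_unique R_CompleteNormedModule _ _ _ _ f l1 H1).
  pose proof (@is_RInt_gen_unique R_CompleteNormedModule _ _ _ _ f l2 H2).
  congruence.
Qed.

Lemma is_RInt_psi_derive_affine (A c d a b u v : R) :
  c <> 0 -> (forall t, Rmin a b <= t <= Rmax a b -> 0 < c * t + d) ->
  c * a + d = u -> c * b + d = v ->
  is_RInt (fun t => A * (1 / (c * t + d) - 1 / (c * t + d) ^ 2)) a b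
    (A * (psi v - psi u) / c).
Proof.
  intros Hc Hpos <- <-.
  replace (A * (psi (c * b + d) - psi (c * a + d)) / c)
    with (minus (A * psi (c * b + d) / c) (A * psi (c * a + d) / c))
    by (unfold minus, plus, opp; simpl; field; exact Hc).
  apply (is_RInt_derive (fun t => A * psi (c * t + d) / c)); intros t Ht;
    specialize (Hpos t Ht).
  - unfold psi; auto_derive; [lra|]. field; split; lra.
  - apply (@ex_derive_continuous R_AbsRing R_NormedModule); auto_derive.
    repeat split; [lra | apply Rgt_not_eq; nra].
Qed.

(* The root [n] of [K / (1 - n / nj) + s = C], or [0] if even the free-flow cost [K + s]
   is at least [C]. *)
Definition accumulation (K nj C s : R) : R :=
  if Rlt_dec s (C - K) then nj * (1 - K / (C - s)) else 0.

Lemma accumulation_range K nj C s :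
  0 < K -> 0 < nj -> 0 <= accumulation K nj C s < nj.
Proof.
  intros HK Hn; unfold accumulation.
  destruct Rlt_dec as [Hs | _]; [|lra].
  assert (0 < K / (C - s)) by (apply Rdiv_lt_0_compat; lra).
  assert (K / (C - s) < 1) by (apply (Rdiv_lt_1 K (C - s)); lra).
  split; nra.
Qed.

Lemma accumulation_spec K nj C s m :
  0 < K -> 0 < nj -> 0 <= m < nj ->
  ((0 < m -> K / (1 - m / nj) + s = C) /\ (m = 0 -> K / (1 - m / nj) + s >= C))
  <-> m = accumulation K nj C s.
Proof.
  intros HK Hn Hm.
  assert (Hq : 0 < 1 - m / nj <= 1).
  { assert (0 <= m / nj) by (apply Rdiv_le_0_compat; lra).
    assert (m / nj < 1) by (apply (Rdiv_lt_1 m nj); lra).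
    lra. }
  unfold accumulation; split.
  - intros [Hpos Hzero]. destruct Hm as [[Hm | <-] Hmn].
    + specialize (Hpos Hm).
      assert (Hlt : 1 - m / nj < 1) by (assert (0 < m / nj) by (apply Rdiv_lt_0_compat; lra); lra).
      assert (Hcs : C - s = K / (1 - m / nj)) by lra.
      destruct Rlt_dec as [_ | Hs].
      * rewrite Hcs. field. repeat split; lra.
      * exfalso; apply Hs.
        enough (K < K / (1 - m / nj)) by lra.
        apply Rlt_div_r; nra.
    + specialize (Hzero eq_refl).
      replace (K / (1 - 0 / nj)) with K in Hzero by (field; lra).
      destruct Rlt_dec; lra.
  - intros ->. destruct Rlt_dec as [Hs | Hs]; split; intro H.
    + field. repeat split; lra.
    + exfalso.
      assert (K / (C - s) < 1) by (apply (Rdiv_lt_1 K (C - s)); lra).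
      nra.
    + lra.
    + replace (K / (1 - 0 / nj)) with K by (field; lra). lra.
Qed.

Lemma sched_nonneg beta gamma tstar t :
  0 < beta -> 0 < gamma -> 0 <= sched beta gamma tstar t.
Proof. intros; unfold sched; destruct Rle_dec; nra. Qed.

Lemma sched_left beta gamma tstar t :
  t <= tstar -> sched beta gamma tstar t = beta * (tstar - t).
Proof. intros; unfold sched; destruct Rle_dec; [reflexivity | lra]. Qed.

Lemma sched_right beta gamma tstar t :
  tstar < t -> sched beta gamma tstar t = gamma * (t - tstar).
Proof. intros; unfold sched; destruct Rle_dec; [lra | reflexivity]. Qed.

Lemma bathtub_cost_free_flow alpha beta gamma tstar L vf nj n t :
  bathtub_cost alpha beta gamma tstar L vf nj n t
  = alpha * L / vf / (1 - n t / nj) + sched beta gamma tstar t.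
Proof. unfold bathtub_cost, travel_time, speed, Rdiv; rewrite Rinv_mult; ring. Qed.

Definition eq_path (alpha beta gamma tstar L vf nj C t : R) : R :=
  accumulation (alpha * L / vf) nj C (sched beta gamma tstar t).

Lemma equilibrium_path_eq alpha beta gamma tstar L vf nj Ns n C :
  0 < alpha -> 0 < L -> 0 < vf -> 0 < nj ->
  is_equilibrium alpha beta gamma tstar L vf nj Ns n C ->
  n = eq_path alpha beta gamma tstar L vf nj C.
Proof.
  intros Ha HL Hv Hn [Hrange [Hpos [Hzero _]]].
  apply functional_extensionality; intro t.
  apply accumulation_spec; [apply Rdiv_lt_0_compat; nra | exact Hn | apply Hrange |].
  rewrite <- !bathtub_cost_free_flow.
  split; [apply Hpos | apply Hzero].
Qed.

Lemma eq_path_is_equilibrium alpha beta gamma tstar L vf nj Ns C :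
  0 < alpha -> 0 < L -> 0 < vf -> 0 < nj ->
  is_RInt_gen (outflow L vf nj (eq_path alpha beta gamma tstar L vf nj C))
    (Rbar_locally m_infty) (Rbar_locally p_infty) Ns ->
  is_equilibrium alpha beta gamma tstar L vf nj Ns (eq_path alpha beta gamma tstar L vf nj C) C.
Proof.
  intros Ha HL Hv Hn Hint.
  assert (HK : 0 < alpha * L / vf) by (apply Rdiv_lt_0_compat; nra).
  set (m := eq_path alpha beta gamma tstar L vf nj C) in *.
  assert (Hrange : forall t, 0 <= m t < nj)
    by (intro t; apply accumulation_range; assumption).
  assert (Hcost : forall t,
    (0 < m t -> bathtub_cost alpha beta gamma tstar L vf nj m t = C) /\
    (m t = 0 -> bathtub_cost alpha beta gamma tstar L vf nj m t >= C)).
  { intro t; rewrite !bathtub_cost_free_flow.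
    apply accumulation_spec; [exact HK | exact Hn | apply Hrange | reflexivity]. }
  repeat split; try apply Hrange; try apply Hcost; exact Hint.
Qed.

Lemma outflow_eq_path alpha beta gamma tstar L vf nj C t :
  0 < alpha -> 0 < L -> 0 < vf -> 0 < nj ->
  sched beta gamma tstar t <= C - alpha * L / vf ->
  outflow L vf nj (eq_path alpha beta gamma tstar L vf nj C) t
  = nj * vf / L * (1 / ((C - sched beta gamma tstar t) / (alpha * L / vf))
                   - 1 / ((C - sched beta gamma tstar t) / (alpha * L / vf)) ^ 2).
Proof.
  intros Ha HL Hv Hn Hs.
  assert (HK : 0 < alpha * L / vf) by (apply Rdiv_lt_0_compat; nra).
  unfold outflow, eq_path, accumulation, speed.
  destruct Rlt_dec as [Hlt | Hge].
  - field. repeat split; try lra; nra.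
  - replace (sched beta gamma tstar t) with (C - alpha * L / vf) by lra.
    field. repeat split; try lra; nra.
Qed.

Lemma outflow_eq_path_outside alpha beta gamma tstar L vf nj C t :
  C - alpha * L / vf <= sched beta gamma tstar t ->
  outflow L vf nj (eq_path alpha beta gamma tstar L vf nj C) t = 0.
Proof.
  intros Hs; unfold outflow, eq_path, accumulation.
  destruct Rlt_dec; [lra|]. unfold Rdiv; ring.
Qed.

Lemma is_RInt_outflow_eq_path_affine alpha beta gamma tstar L vf nj C a b p q u v :
  0 < alpha -> 0 < L -> 0 < vf -> 0 < nj -> a <= b -> p <> 0 ->
  (forall t, a <= t <= b ->
     sched beta gamma tstar t = p * t + q /\ p * t + q <= C - alpha * L / vf) ->
  (C - (p * a + q)) / (alpha * L / vf) = u ->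
  (C - (p * b + q)) / (alpha * L / vf) = v ->
  is_RInt (outflow L vf nj (eq_path alpha beta gamma tstar L vf nj C)) a b
    (nj * vf / L * (psi v - psi u) / (- p / (alpha * L / vf))).
Proof.
  intros Ha HL Hv Hn Hab Hp Hsched Hu Hv'.
  set (K := alpha * L / vf) in *.
  assert (HK : 0 < K) by (apply Rdiv_lt_0_compat; nra).
  apply (is_RInt_ext
    (fun t => nj * vf / L * (1 / (- p / K * t + (C - q) / K) - 1 / (- p / K * t + (C - q) / K) ^ 2))).
  - intros x Hx; rewrite Rmin_left, Rmax_right in Hx by lra.
    destruct (Hsched x) as [Es Hle]; [lra|].
    rewrite outflow_eq_path by (try rewrite Es; assumption).
    rewrite Es. fold K.
    replace ((C - (p * x + q)) / K) with (- p / K * x + (C - q) / K) by (field; lra).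
    reflexivity.
  - apply is_RInt_psi_derive_affine.
    + unfold Rdiv; apply Rmult_integral_contrapositive_currified; [lra | apply Rinv_neq_0_compat; lra].
    + intros t Ht; rewrite Rmin_left, Rmax_right in Ht by lra.
      destruct (Hsched t Ht) as [_ Hle].
      replace (- p / K * t + (C - q) / K) with ((C - (p * t + q)) / K) by (field; lra).
      apply Rdiv_lt_0_compat; lra.
    + rewrite <- Hu; field; lra.
    + rewrite <- Hv'; field; lra.
Qed.

Lemma is_RInt_gen_outflow_eq_path alpha beta gamma tstar L vf nj C :
  0 < alpha -> 0 < beta -> 0 < gamma -> 0 < L -> 0 < vf -> 0 < nj ->
  alpha * L / vf < C ->
  is_RInt_gen (outflow L vf nj (eq_path alpha beta gamma tstar L vf nj C))
    (Rbar_locally m_infty) (Rbar_locally p_infty)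
    (eq_rhs alpha beta gamma nj (theta alpha L vf C)).
Proof.
  intros Ha Hb Hg HL Hv Hn HC.
  set (K := alpha * L / vf) in *.
  assert (HK : 0 < K) by (apply Rdiv_lt_0_compat; nra).
  set (D := C - K).
  assert (HD : 0 < D) by (unfold D; lra).
  (* The outflow vanishes outside [a, b], where the schedule delay exceeds [D]. *)
  set (a := tstar - D / beta); set (b := tstar + D / gamma).
  assert (Hab : a <= tstar <= b).
  { assert (0 < D / beta) by (apply Rdiv_lt_0_compat; lra).
    assert (0 < D / gamma) by (apply Rdiv_lt_0_compat; lra).
    unfold a, b; lra. }
  assert (Hleft : is_RInt (outflow L vf nj (eq_path alpha beta gamma tstar L vf nj C)) a tstar
                    (nj * vf / L * (psi (C / K) - psi 1) / (- - beta / K))).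
  { apply (is_RInt_outflow_eq_path_affine _ _ _ _ _ _ _ _ _ _ (- beta) (beta * tstar));
      try lra; try (unfold a, D, K; field; repeat split; lra).
    intros t Ht; rewrite sched_left by lra; split; [ring|].
    assert ((tstar - t) * beta <= D) by (apply (Rle_div_r (tstar - t) D beta); unfold a in Ht; lra).
    fold K D; lra. }
  assert (Hright : is_RInt (outflow L vf nj (eq_path alpha beta gamma tstar L vf nj C)) tstar b
                    (nj * vf / L * (psi 1 - psi (C / K)) / (- gamma / K))).
  { apply (is_RInt_outflow_eq_path_affine _ _ _ _ _ _ _ _ _ _ gamma (- gamma * tstar));
      try lra; try (unfold b, D, K; field; repeat split; lra).
    intros t Ht.
    assert ((t - tstar) * gamma <= D) by (apply (Rle_div_r (t - tstar) D gamma); unfold b in Ht; lra).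
    fold K D; unfold sched; destruct Rle_dec; split; nra. }
  apply (is_RInt_gen_of_vanishing_outside _ a b).
  - intros x Hx; apply outflow_eq_path_outside; fold K.
    destruct Hx as [Hx | Hx].
    + rewrite sched_left by lra.
      assert (D < (tstar - x) * beta) by (apply (Rlt_div_l D (tstar - x) beta); unfold a in Hx; lra).
      unfold D in *; lra.
    + rewrite sched_right by lra.
      assert (D < (x - tstar) * gamma) by (apply (Rlt_div_l D (x - tstar) gamma); unfold b in Hx; lra).
      unfold D in *; lra.
  - pose proof (is_RInt_Chasles _ _ _ _ _ _ Hleft Hright) as H.
    unfold plus in H; simpl in H.
    replace (eq_rhs alpha beta gamma nj (theta alpha L vf C)) with
      (nj * vf / L * (psi (C / K) - psi 1) / (- - beta / K)
       + nj * vf / L * (psi 1 - psi (C / K)) / (- gamma / K)); [exact H|].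
    unfold eq_rhs, theta, K; fold (psi (C * vf / (alpha * L))).
    replace (C / (alpha * L / vf)) with (C * vf / (alpha * L)) by (field; lra).
    rewrite psi_1; field; repeat split; lra.
Qed.

Lemma is_RInt_gen_outflow_eq_path_congestion_free alpha beta gamma tstar L vf nj C :
  0 < beta -> 0 < gamma -> C <= alpha * L / vf ->
  is_RInt_gen (outflow L vf nj (eq_path alpha beta gamma tstar L vf nj C))
    (Rbar_locally m_infty) (Rbar_locally p_infty) 0.
Proof.
  intros Hb Hg HC.
  apply (is_RInt_gen_of_vanishing_outside _ 0 0); [|exact (is_RInt_point _ _)].
  intros x _; apply outflow_eq_path_outside.
  pose proof (sched_nonneg beta gamma tstar x Hb Hg); lra.
Qed.

Lemma theta_gt_1 alpha L vf C :
  0 < alpha -> 0 < L -> 0 < vf -> alpha * L / vf < C -> 1 < theta alpha L vf C.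
Proof.
  intros Ha HL Hv HC; unfold theta.
  replace (C * vf / (alpha * L)) with (C / (alpha * L / vf)) by (field; lra).
  apply (Rlt_div_r 1 C); [apply Rdiv_lt_0_compat; nra | lra].
Qed.

Lemma theta_inj alpha L vf C C' :
  0 < alpha -> 0 < L -> 0 < vf -> theta alpha L vf C = theta alpha L vf C' -> C = C'.
Proof.
  intros Ha HL Hv E; unfold theta in E.
  apply (Rmult_eq_reg_r (vf / (alpha * L))); [|apply Rgt_not_eq, Rdiv_lt_0_compat; nra].
  unfold Rdiv in *; lra.
Qed.

Lemma theta_mul_free_flow alpha L vf th :
  0 < alpha -> 0 < L -> 0 < vf -> theta alpha L vf (th * (alpha * L / vf)) = th.
Proof. intros; unfold theta; field; lra. Qed.

Lemma equilibrium_eq_rhs alpha beta gamma tstar L vf nj Ns n C :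
  0 < alpha -> 0 < beta -> 0 < gamma -> 0 < L -> 0 < vf -> 0 < nj -> 0 < Ns ->
  is_equilibrium alpha beta gamma tstar L vf nj Ns n C ->
  alpha * L / vf < C /\ Ns = eq_rhs alpha beta gamma nj (theta alpha L vf C).
Proof.
  intros Ha Hb Hg HL Hv Hn HN Heq.
  pose proof (equilibrium_path_eq _ _ _ _ _ _ _ _ _ _ Ha HL Hv Hn Heq) as En.
  destruct Heq as [_ [_ [_ Hint]]]; rewrite En in Hint.
  destruct (Rle_lt_dec C (alpha * L / vf)) as [HC | HC].
  - exfalso.
    pose proof (is_RInt_gen_line_unique _ _ _ Hint
      (is_RInt_gen_outflow_eq_path_congestion_free alpha beta gamma tstar L vf nj C Hb Hg HC)).
    lra.
  - split; [exact HC|].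
    exact (is_RInt_gen_line_unique _ _ _ Hint
      (is_RInt_gen_outflow_eq_path alpha beta gamma tstar L vf nj C Ha Hb Hg HL Hv Hn HC)).
Qed.

Lemma eq_path_is_equilibrium_theta alpha beta gamma tstar L vf nj th :
  0 < alpha -> 0 < beta -> 0 < gamma -> 0 < L -> 0 < vf -> 0 < nj -> 1 < th ->
  is_equilibrium alpha beta gamma tstar L vf nj (eq_rhs alpha beta gamma nj th)
    (eq_path alpha beta gamma tstar L vf nj (th * (alpha * L / vf))) (th * (alpha * L / vf)).
Proof.
  intros Ha Hb Hg HL Hv Hn Hth.
  assert (HK : 0 < alpha * L / vf) by (apply Rdiv_lt_0_compat; nra).
  apply eq_path_is_equilibrium; try assumption.
  rewrite <- (theta_mul_free_flow alpha L vf th) at 2 by assumption.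
  apply is_RInt_gen_outflow_eq_path; try assumption; nra.
Qed.

Lemma av_equilibria alpha beta gamma tstar L vf nj eta xi th th' :
  0 < alpha -> 0 < beta -> 0 < gamma -> 0 < L -> 0 < vf -> 0 < nj -> 0 < eta -> 0 < xi ->
  1 < th -> 1 < th' -> eta * xi * psi th' = psi th ->
  exists n n',
    is_equilibrium alpha beta gamma tstar L vf nj (eq_rhs alpha beta gamma nj th)
      n (th * (alpha * L / vf)) /\
    is_equilibrium (eta * alpha) beta gamma tstar L vf (xi * nj) (eq_rhs alpha beta gamma nj th)
      n' (th' * (eta * alpha * L / vf)).
Proof.
  intros Ha Hb Hg HL Hv Hn He Hx Hth Hth' Hpsi.
  eexists; eexists; split; [apply eq_path_is_equilibrium_theta; assumption|].
  replace (eq_rhs alpha beta gamma nj th) with (eq_rhs (eta * alpha) beta gamma (xi * nj) th')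
    by (rewrite !eq_rhs_psi, <- Hpsi; ring).
  apply eq_path_is_equilibrium_theta; try assumption; nra.
Qed.

Lemma psi_exp_bounds a : 0 < a -> a - 1 < psi (exp a) < a.
Proof.
  intros Ha; rewrite psi_exp.
  pose proof (exp_pos (- a)).
  assert (exp (- a) < 1) by (rewrite <- exp_0; apply exp_increasing; lra).
  lra.
Qed.

(* With [e = exp 1] this reads [2 e^2 + 1 / e < e^3 + e], i.e. [e^2 (e - 1)^2 > 1]. *)
Lemma exp_2_psi_exp_3_lt : exp 2 * psi (exp 3) < exp 3 * psi (exp 2).
Proof.
  rewrite !psi_exp.
  assert (He : 2 < exp 1) by (pose proof (exp_ineq1 1 ltac:(lra)); lra).
  assert (E2 : exp 2 = exp 1 * exp 1) by (rewrite <- exp_plus; f_equal; ring).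
  assert (E3 : exp 3 = exp 1 * exp 1 * exp 1) by (rewrite <- !exp_plus; f_equal; ring).
  rewrite !exp_Ropp, E2, E3.
  set (e := exp 1) in *.
  replace (e * e * (3 + / (e * e * e) - 1)) with (2 * e * e + / e) by (field; lra).
  replace (e * e * e * (2 + / (e * e) - 1)) with (e * e * e + e) by (field; lra).
  assert (/ e < 1) by (rewrite <- Rinv_1; apply Rinv_lt_contravar; lra).
  assert (1 < (e - 1) * (e - 1)) by nra.
  nra.
Qed.

Lemma equilibrium_cost_unique alpha beta gamma tstar L vf nj Ns n C n' C' :
  0 < alpha -> 0 < beta -> 0 < gamma -> 0 < L -> 0 < vf -> 0 < nj -> 0 < Ns ->
  is_equilibrium alpha beta gamma tstar L vf nj Ns n C ->
  is_equilibrium alpha beta gamma tstar L vf nj Ns n' C' -> C' = C.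
Proof.
  intros Ha Hb Hg HL Hv Hn HN Heq Heq'.
  destruct (equilibrium_eq_rhs _ _ _ _ _ _ _ _ _ _ Ha Hb Hg HL Hv Hn HN Heq) as [HC HNs].
  destruct (equilibrium_eq_rhs _ _ _ _ _ _ _ _ _ _ Ha Hb Hg HL Hv Hn HN Heq') as [HC' HNs'].
  pose proof (theta_gt_1 _ _ _ _ Ha HL Hv HC).
  pose proof (theta_gt_1 _ _ _ _ Ha HL Hv HC').
  apply (theta_inj alpha L vf); try assumption.
  apply (eq_rhs_inj alpha beta gamma nj); try assumption; try lra; congruence.
Qed.

(* Before: theta = e^2.  After, with xi = 1 and eta = psi (e^2) / psi (e^3): theta = e^3. *)
Lemma av_can_raise_equilibrium_cost :
  exists (alpha beta gamma tstar L vf nj Ns eta xi : R),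
     0 < alpha /\ 0 < beta /\ 0 < gamma /\ 0 < L /\ 0 < vf /\ 0 < nj /\ 0 < Ns /\
     beta / alpha < eta /\ eta <= 1 /\ 1 <= xi /\
     exists (n : R -> R) (C : R) (n' : R -> R) (C' : R),
       is_equilibrium alpha beta gamma tstar L vf nj Ns n C /\
       theta alpha L vf C > 2 /\
       is_equilibrium (eta * alpha) beta gamma tstar L vf (xi * nj) Ns n' C' /\
       theta (eta * alpha) L vf C' > 2 /\
       C < C'.
Proof.
  set (eta := psi (exp 2) / psi (exp 3)).
  destruct (psi_exp_bounds 2 ltac:(lra)) as [P2l P2u].
  destruct (psi_exp_bounds 3 ltac:(lra)) as [P3l P3u].
  assert (E2 : 3 < exp 2) by (pose proof (exp_ineq1 2 ltac:(lra)); lra).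
  assert (E3 : 3 < exp 3) by (pose proof (exp_ineq1 3 ltac:(lra)); lra).
  assert (Heta_pos : 0 < eta) by (apply Rdiv_lt_0_compat; lra).
  assert (Heta : eta * 1 * psi (exp 3) = psi (exp 2)) by (unfold eta; field; lra).
  destruct (av_equilibria 1 (1/4) 1 0 1 1 1 eta 1 (exp 2) (exp 3)) as [n [n' [Q Q']]];
    try lra.
  exists 1, (1/4), 1, 0, 1, 1, 1, (eq_rhs 1 (1/4) 1 1 (exp 2)), eta, 1.
  repeat split; try lra.
  - rewrite eq_rhs_psi; lra.
  - apply (Rlt_div_r (1/4 / 1) (psi (exp 2)) (psi (exp 3))); lra.
  - apply (Rdiv_le_1 (psi (exp 2)) (psi (exp 3))); lra.
  - exists n, (exp 2 * (1 * 1 / 1)), n', (exp 3 * (eta * 1 * 1 / 1)).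
    rewrite !theta_mul_free_flow by lra.
    refine (conj Q (conj _ (conj Q' (conj _ _)))); try lra.
    pose proof exp_2_psi_exp_3_lt.
    apply (Rmult_lt_reg_r (psi (exp 3))); [lra|].
    replace (exp 3 * (eta * 1 * 1 / 1) * psi (exp 3)) with (exp 3 * psi (exp 2))
      by (unfold eta; field; lra).
    lra.
Qed.

(* Before: theta = 4.  After, with eta = 1 and xi = psi 4 / psi 3: theta = 3. *)
Lemma av_can_lower_equilibrium_cost :
  exists (alpha beta gamma tstar L vf nj Ns eta xi : R),
     0 < alpha /\ 0 < beta /\ 0 < gamma /\ 0 < L /\ 0 < vf /\ 0 < nj /\ 0 < Ns /\
     beta / alpha < eta /\ eta <= 1 /\ 1 <= xi /\
     exists (n : R -> R) (C : R) (n' : R -> R) (C' : R),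
       is_equilibrium alpha beta gamma tstar L vf nj Ns n C /\
       theta alpha L vf C > 2 /\
       is_equilibrium (eta * alpha) beta gamma tstar L vf (xi * nj) Ns n' C' /\
       theta (eta * alpha) L vf C' > 2 /\
       C' < C.
Proof.
  set (xi := psi 4 / psi 3).
  assert (P3 : 0 < psi 3) by (rewrite <- psi_1; apply psi_lt; lra).
  assert (P34 : psi 3 < psi 4) by (apply psi_lt; lra).
  assert (Hxi_pos : 0 < xi) by (apply Rdiv_lt_0_compat; lra).
  assert (Hxi : 1 * xi * psi 3 = psi 4) by (unfold xi; field; lra).
  destruct (av_equilibria 1 (1/2) 1 0 1 1 1 1 xi 4 3) as [n [n' [Q Q']]]; try lra.
  exists 1, (1/2), 1, 0, 1, 1, 1, (eq_rhs 1 (1/2) 1 1 4), 1, xi.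
  repeat split; try lra.
  - rewrite eq_rhs_psi; nra.
  - apply (Rle_div_r 1 (psi 4) (psi 3)); lra.
  - exists n, (4 * (1 * 1 / 1)), n', (3 * (1 * 1 * 1 / 1)).
    rewrite !theta_mul_free_flow by lra.
    refine (conj Q (conj _ (conj Q' (conj _ _)))); lra.
Qed.

Theorem proposition1 :
  (* (i) uniqueness of the hypercongested short-run equilibrium cost *)
  (forall (alpha beta gamma tstar L vf nj Ns : R),
     0 < alpha -> 0 < beta -> 0 < gamma -> 0 < L -> 0 < vf -> 0 < nj -> 0 < Ns ->
     forall (n : R -> R) (Cstar : R),
       is_equilibrium alpha beta gamma tstar L vf nj Ns n Cstar ->
       theta alpha L vf Cstar > 2 ->
       Ns = eq_rhs alpha beta gamma nj (theta alpha L vf Cstar) /\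
       (exists! th : R, th > 2 /\ Ns = eq_rhs alpha beta gamma nj th) /\
       (forall (n' : R -> R) (C' : R),
          is_equilibrium alpha beta gamma tstar L vf nj Ns n' C' -> C' = Cstar)) /\
  (* (ii) autonomous vehicles (alpha -> eta alpha, n_j -> xi n_j) may increase
     the equilibrium cost ... *)
  (exists (alpha beta gamma tstar L vf nj Ns eta xi : R),
     0 < alpha /\ 0 < beta /\ 0 < gamma /\ 0 < L /\ 0 < vf /\ 0 < nj /\ 0 < Ns /\
     beta / alpha < eta /\ eta <= 1 /\ 1 <= xi /\
     exists (n : R -> R) (C : R) (n' : R -> R) (C' : R),
       is_equilibrium alpha beta gamma tstar L vf nj Ns n C /\
       theta alpha L vf C > 2 /\
       is_equilibrium (eta * alpha) beta gamma tstar L vf (xi * nj) Ns n' C' /\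
       theta (eta * alpha) L vf C' > 2 /\
       C < C') /\
  (* ... and may decrease it *)
  (exists (alpha beta gamma tstar L vf nj Ns eta xi : R),
     0 < alpha /\ 0 < beta /\ 0 < gamma /\ 0 < L /\ 0 < vf /\ 0 < nj /\ 0 < Ns /\
     beta / alpha < eta /\ eta <= 1 /\ 1 <= xi /\
     exists (n : R -> R) (C : R) (n' : R -> R) (C' : R),
       is_equilibrium alpha beta gamma tstar L vf nj Ns n C /\
       theta alpha L vf C > 2 /\
       is_equilibrium (eta * alpha) beta gamma tstar L vf (xi * nj) Ns n' C' /\
       theta (eta * alpha) L vf C' > 2 /\
       C' < C).
Proof.
  split; [|split; [exact av_can_raise_equilibrium_cost | exact av_can_lower_equilibrium_cost]].
  intros alpha beta gamma tstar L vf nj Ns Ha Hb Hg HL Hv Hn HN n C Heq Hth.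
  destruct (equilibrium_eq_rhs _ _ _ _ _ _ _ _ _ _ Ha Hb Hg HL Hv Hn HN Heq) as [_ HNs].
  split; [exact HNs | split].
  - exists (theta alpha L vf C); split; [split; assumption |].
    intros th [Hth' HNs'].
    apply (eq_rhs_inj alpha beta gamma nj); try assumption; try lra; congruence.
  - intros n' C' Heq'.
    exact (equilibrium_cost_unique _ _ _ _ _ _ _ _ _ _ _ _ Ha Hb Hg HL Hv Hn HN Heq Heq').
Qed.
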